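(* Let $\beta>0$, $\gamma\ge0$, $\mu_c,\mu_d,\varphi\in\mathbb R$, $\sigma,\sigma_c,\sigma_d>0$ and $-1<\rho<1$. Let $\{(\xi_t,\epsilon_t,\eta_t)\}_{t\ge1}$ be iid standard normal in $\mathbb R^3$, let $X_{t+1}=\rho X_t+\sigma\eta_{t+1}$ with $X_0\sim N(0,\sigma^2/(1-\rho^2))$ independent of the shocks, and $$\Phi_{t+1}=\beta\exp\{(\mu_d+\varphi X_t+\sigma_d\xi_{t+1})-\gamma(\mu_c+X_t+\sigma_c\epsilon_{t+1})\}.$$ Then for every $p\ge1$ the limit $\mathcal L_\Phi^p$ exists and $$\mathcal L_\Phi^p=\ln\beta+\mu_d-\gamma\mu_c+\frac{\sigma^2}{2}\frac{(\varphi-\gamma)^2}{(1-\rho)^2}+\frac{\sigma_d^2+(\gamma\sigma_c)^2}{2}.$$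
   Context: $\mathcal L_\Phi^p:=\lim_{n\to\infty}\frac{1}{np}\ln\int\big(\mathbb E_x\prod_{t=1}^n\Phi_t\big)^p\pi(dx)$, where $\mathbb E_x$ denotes expectation conditional on $X_0=x$ and $\pi=N(0,\sigma^2/(1-\rho^2))$ is the stationary law of $\{X_t\}$. *)

From Stdlib Require Import Reals ClassicalEpsilon.
Open Scope R_scope.

Definition improper_integral (f : R -> R) (l : R) : Prop :=
  (forall a b, inhabited (Riemann_integrable f a b)) /\
  forall eps, 0 < eps -> exists M, forall a b (pr : Riemann_integrable f a b),
    a <= - M -> M <= b -> Rabs (RiemannInt pr - l) < eps.

(** The value of the improper integral (chosen classically; meaningful
    whenever the integral exists). *)
Definition Integral (f : R -> R) : R :=
  epsilon (inhabits 0) (fun l => improper_integral f l).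

Definition normal_density (v : R) (z : R) : R :=
  exp (- (z * z) / (2 * v)) / sqrt (2 * PI * v).

Definition GE (g : R -> R) : R := Integral (fun z => g z * normal_density 1 z).

Definition scons (z : R) (w : nat -> R) : nat -> R :=
  fun k => match k with O => z | S k' => w k' end.

(** Expectation of F(W) where W_0, ..., W_{m-1} are iid standard normal
    (F is meant to depend only on the first m coordinates; the remaining
    coordinates are set to 0), computed as an iterated integral. *)
Fixpoint GEn (m : nat) (F : (nat -> R) -> R) : R :=
  match m with
  | O => F (fun _ => 0)
  | S m' => GE (fun z => GEn m' (fun w => F (scons z w)))
  end.

(** Shocks: for t >= 1, xi_t = w (3(t-1)), eps_t = w (3(t-1)+1),
    eta_t = w (3(t-1)+2). *)
Definition xi (w : nat -> R) (t : nat) : R := w (3 * (t - 1))%nat.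
Definition epsi (w : nat -> R) (t : nat) : R := w (3 * (t - 1) + 1)%nat.
Definition eta (w : nat -> R) (t : nat) : R := w (3 * (t - 1) + 2)%nat.

Fixpoint Xpath (rho sigma x : R) (w : nat -> R) (t : nat) : R :=
  match t with
  | O => x
  | S t' => rho * Xpath rho sigma x w t' + sigma * eta w (S t')
  end.

Definition Phi (beta gamma mu_c mu_d varphi rho sigma sigma_c sigma_d x : R)
  (w : nat -> R) (t1 : nat) : R :=
  let t := (t1 - 1)%nat in
  let X := Xpath rho sigma x w t in
  beta * exp ((mu_d + varphi * X + sigma_d * xi w t1)
              - gamma * (mu_c + X + sigma_c * epsi w t1)).

Fixpoint prodR (n : nat) (f : nat -> R) : R :=
  match n with O => 1 | S n' => prodR n' f * f n end.
(* prodR n f = f 1 * ... * f n *)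

Definition condExpProdPhi (beta gamma mu_c mu_d varphi rho sigma sigma_c sigma_d : R)
  (n : nat) (x : R) : R :=
  GEn (3 * n)%nat (fun w =>
    prodR n (Phi beta gamma mu_c mu_d varphi rho sigma sigma_c sigma_d x w)).

Definition LPhi_seq (beta gamma mu_c mu_d varphi rho sigma sigma_c sigma_d p : R)
  (n : nat) : R :=
  / (INR n * p) *
  ln (Integral (fun x =>
        Rpower (condExpProdPhi beta gamma mu_c mu_d varphi rho sigma sigma_c sigma_d n x) p
        * normal_density (sigma ^ 2 / (1 - rho ^ 2)) x)).

From Stdlib Require Import Reals Lra Psatz ClassicalEpsilon FunctionalExtensionality.
From Coquelicot Require Import Coquelicot.
Open Scope R_scope.

(* Conditionally on [X_0 = x], integrating out the three shocks of the first
   period with the Gaussian moment generating function [E e^(aZ) = e^(a^2/2)]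
   shows by induction that [E_x prod_(t<=n) Phi_t = exp (A_n + B_n x)], where
   [B_n = (varphi - gamma) (1 - rho^n) / (1 - rho)] and [A_n] grows linearly in
   [n] up to terms in [rho^n].  Integrating the [p]-th power against the
   stationary law [N(0, v)] is one more Gaussian mgf, so the [n]-th term of the
   sequence is [A_n / n + p B_n^2 v / (2 n)], and the limit follows from
   [rho^n -> 0].  The mgf rests on [int e^(-t^2) = sqrt pi], obtained from the
   fact that [int_0^1 e^(-x^2 (1+t^2)) / (1+t^2) dt + (int_0^x e^(-t^2) dt)^2]
   has derivative [0], equals [pi/4] at [x = 0], and its first term vanishes
   as [x -> +oo]. *)


Lemma exp_le_exp (x y : R) : x <= y -> exp x <= exp y.
Proof.
  intros [Hlt | ->]; [left; apply exp_increasing, Hlt | right; reflexivity].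
Qed.

Definition gauss (t : R) : R := exp (- (t * t)).
Definition gauss_prim (x : R) : R := RInt gauss 0 x.

Lemma continuous_gauss (x : R) : continuous gauss x.
Proof.
  apply (@ex_derive_continuous R_AbsRing R_NormedModule).
  unfold gauss; auto_derive; auto.
Qed.

Lemma ex_RInt_gauss (a b : R) : ex_RInt gauss a b.
Proof.
  apply (@ex_RInt_continuous R_CompleteNormedModule); intros; apply continuous_gauss.
Qed.

Lemma is_derive_gauss_prim (x : R) : is_derive gauss_prim x (gauss x).
Proof.
  apply is_derive_RInt with (a := 0).
  - apply filter_forall; intros b.
    apply (@RInt_correct R_CompleteNormedModule), ex_RInt_gauss.
  - apply continuous_gauss.
Qed.

Lemma gauss_prim_0 : gauss_prim 0 = 0.
Proof. apply (@RInt_point R_CompleteNormedModule). Qed.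

Lemma gauss_prim_nonneg (x : R) : 0 <= x -> 0 <= gauss_prim x.
Proof.
  intros Hx; apply RInt_ge_0; auto using ex_RInt_gauss.
  intros; apply Rlt_le, exp_pos.
Qed.

Lemma gauss_prim_opp (x : R) : gauss_prim (- x) = - gauss_prim x.
Proof.
  unfold gauss_prim.
  assert (E := RInt_comp_lin gauss (-1) 0 0 x (ex_RInt_gauss _ _)).
  replace (-1 * 0 + 0) with 0 in E by ring.
  replace (-1 * x + 0) with (- x) in E by ring.
  rewrite <- E, (RInt_ext _ (fun y => scal (-1) (gauss y))).
  - rewrite (@RInt_scal R_CompleteNormedModule) by apply ex_RInt_gauss.
    unfold scal; simpl; unfold mult; simpl; ring.
  - intros y _; unfold gauss; do 3 f_equal; ring.
Qed.

Lemma RInt_gauss_affine (a b c m : R) : 0 < c ->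
  RInt (fun z => gauss ((z - m) / c)) a b
  = c * (gauss_prim ((b - m) / c) - gauss_prim ((a - m) / c)).
Proof.
  intros Hc; apply is_RInt_unique.
  replace (c * _) with (minus (c * gauss_prim ((b - m) / c)) (c * gauss_prim ((a - m) / c)))
    by (unfold minus, plus, opp; simpl; ring).
  apply (is_RInt_derive (fun z => c * gauss_prim ((z - m) / c))).
  - intros z _.
    replace (gauss ((z - m) / c)) with (c * scal (/ c) (gauss ((z - m) / c)))
      by (unfold scal; simpl; unfold mult; simpl; field; lra).
    apply is_derive_scal, (is_derive_comp gauss_prim (fun z => (z - m) / c)).
    + apply is_derive_gauss_prim.
    + auto_derive; [auto | field; lra].
  - intros z _; apply (@ex_derive_continuous R_AbsRing R_NormedModule).
    unfold gauss; auto_derive; auto.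
Qed.

Definition gauss_aux_integrand (x t : R) : R := exp (- (x * x) * (1 + t * t)) / (1 + t * t).
Definition gauss_aux (x : R) : R := RInt (gauss_aux_integrand x) 0 1.

Lemma ex_RInt_gauss_aux_integrand (x a b : R) : ex_RInt (gauss_aux_integrand x) a b.
Proof.
  apply (@ex_RInt_continuous R_CompleteNormedModule); intros t _.
  apply (@ex_derive_continuous R_AbsRing R_NormedModule).
  unfold gauss_aux_integrand; auto_derive; nra.
Qed.

Lemma Derive_gauss_aux_integrand (x t : R) :
  Derive (fun z => gauss_aux_integrand z t) x = -2 * x * exp (- (x * x) * (1 + t * t)).
Proof.
  apply is_derive_unique; unfold gauss_aux_integrand; auto_derive.
  - nra.
  - field; nra.
Qed.

Lemma continuity_2d_pt_exp (f : R -> R -> R) (x y : R) :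
  continuity_2d_pt f x y -> continuity_2d_pt (fun u v => exp (f u v)) x y.
Proof.
  intros H; apply continuity_1d_2d_pt_comp; auto.
  apply derivable_continuous_pt, derivable_pt_exp.
Qed.

Lemma RInt_gauss_dilate (x : R) : RInt (fun t => x * gauss (x * t)) 0 1 = gauss_prim x.
Proof.
  unfold gauss_prim.
  assert (E := RInt_comp_lin gauss x 0 0 1 (ex_RInt_gauss _ _)).
  replace (x * 0 + 0) with 0 in E by ring.
  replace (x * 1 + 0) with x in E by ring.
  rewrite <- E; apply RInt_ext; intros t _.
  replace (x * t + 0) with (x * t) by ring; reflexivity.
Qed.

Lemma is_derive_gauss_aux (x : R) :
  is_derive gauss_aux x (-2 * gauss x * gauss_prim x).
Proof.
  replace (-2 * gauss x * gauss_prim x)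
    with (RInt (fun t => Derive (fun u => gauss_aux_integrand u t) x) 0 1).
  { apply is_derive_RInt_param.
    - apply filter_forall; intros; unfold gauss_aux_integrand; auto_derive; nra.
    - intros t _; eapply continuity_2d_pt_ext.
      { intros u v; symmetry; apply Derive_gauss_aux_integrand. }
      repeat first
        [ apply continuity_2d_pt_exp | apply continuity_2d_pt_mult
        | apply continuity_2d_pt_plus | apply continuity_2d_pt_opp
        | apply continuity_2d_pt_const | apply continuity_2d_pt_id1
        | apply continuity_2d_pt_id2 ].
    - apply filter_forall; intros; apply ex_RInt_gauss_aux_integrand. }
  rewrite <- RInt_gauss_dilate.
  transitivity (RInt (fun t => scal (-2 * gauss x) (x * gauss (x * t))) 0 1).
  - apply RInt_ext; intros t _.
    rewrite Derive_gauss_aux_integrand; unfold gauss, scal; simpl; unfold mult; simpl.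
    replace (- (x * x) * (1 + t * t)) with (- (x * x) + - (x * t * (x * t))) by ring.
    rewrite exp_plus; ring.
  - apply (@RInt_scal R_CompleteNormedModule).
    apply (@ex_RInt_continuous R_CompleteNormedModule); intros.
    apply (@ex_derive_continuous R_AbsRing R_NormedModule).
    unfold gauss; auto_derive; auto.
Qed.

Lemma gauss_aux_0 : gauss_aux 0 = PI / 4.
Proof.
  rewrite <- atan_1.
  replace (atan 1) with (atan 1 - atan 0) by (rewrite atan_0; ring).
  apply is_RInt_unique.
  eapply is_RInt_ext.
  2: apply (@is_RInt_derive R_CompleteNormedModule atan (fun t => / (1 + t ^ 2))).
  - intros t _; unfold gauss_aux_integrand.
    replace (- (0 * 0) * (1 + t * t)) with 0 by ring.
    rewrite exp_0; simpl; field; nra.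
  - intros t _; apply is_derive_Reals, derivable_pt_lim_atan.
  - intros t _; apply (@ex_derive_continuous R_AbsRing R_NormedModule).
    auto_derive; nra.
Qed.

Lemma gauss_aux_plus_sq (x : R) : 0 < x ->
  gauss_aux x + gauss_prim x * gauss_prim x = PI / 4.
Proof.
  intros Hx.
  rewrite <- (eq_is_derive (fun y => gauss_aux y + gauss_prim y * gauss_prim y) 0 x);
    auto.
  - rewrite gauss_aux_0, gauss_prim_0; ring.
  - intros t _.
    replace (@zero R_NormedModule)
      with (-2 * gauss t * gauss_prim t + (gauss t * gauss_prim t + gauss_prim t * gauss t))
      by (unfold zero; simpl; ring).
    apply (@is_derive_plus R_AbsRing R_NormedModule); [apply is_derive_gauss_aux |].
    apply (@is_derive_mult R_AbsRing); try apply is_derive_gauss_prim.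
    intros; apply Rmult_comm.
Qed.

Lemma gauss_aux_bounds (x : R) : 0 <= gauss_aux x <= exp (- (x * x)).
Proof.
  split.
  - apply RInt_ge_0; [lra | apply ex_RInt_gauss_aux_integrand |].
    intros t _; apply Rlt_le, Rdiv_lt_0_compat; [apply exp_pos | nra].
  - apply Rle_trans with (RInt (fun _ => exp (- (x * x))) 0 1).
    + apply RInt_le; [lra | apply ex_RInt_gauss_aux_integrand | apply ex_RInt_const |].
      intros t Ht; unfold gauss_aux_integrand, Rdiv.
      apply Rle_trans with (exp (- (x * x) * (1 + t * t)) * 1).
      * apply Rmult_le_compat_l; [apply Rlt_le, exp_pos |].
        rewrite <- Rinv_1; apply Rinv_le_contravar; nra.
      * rewrite Rmult_1_r; apply exp_le_exp; nra.
    + rewrite RInt_const; unfold scal; simpl; unfold mult; simpl; lra.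
Qed.

Lemma gauss_prim_cv (eps : R) : 0 < eps ->
  exists M, forall x, M <= x -> Rabs (gauss_prim x - sqrt PI / 2) < eps.
Proof.
  intros He.
  set (s := sqrt PI / 2).
  assert (Hs : 0 < s) by (apply Rdiv_lt_0_compat; [apply sqrt_lt_R0, PI_RGT_0 | lra]).
  assert (Hss : s * s = PI / 4).
  { unfold s; replace (sqrt PI / 2 * (sqrt PI / 2)) with (sqrt PI * sqrt PI / 4) by field.
    rewrite sqrt_sqrt; [reflexivity | apply Rlt_le, PI_RGT_0]. }
  exists (Rmax 1 (1 + Rabs (ln (eps * s)))); intros x Hx.
  assert (H1 : 1 <= x) by (eapply Rle_trans; [apply Rmax_l | exact Hx]).
  assert (H2 : 1 + Rabs (ln (eps * s)) <= x) by (eapply Rle_trans; [apply Rmax_r | exact Hx]).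
  assert (Hg := gauss_prim_nonneg x ltac:(lra)).
  assert (Hsum := gauss_aux_plus_sq x ltac:(lra)).
  assert (HF := gauss_aux_bounds x).
  assert (Htail : exp (- (x * x)) < eps * s).
  { apply Rle_lt_trans with (exp (- x)); [apply exp_le_exp; nra |].
    rewrite <- (exp_ln (eps * s)) by nra; apply exp_increasing.
    assert (T := Rle_abs (- ln (eps * s))); rewrite Rabs_Ropp in T; lra. }
  assert (Habs : Rabs (gauss_prim x - s) * (gauss_prim x + s) = gauss_aux x).
  { rewrite <- (Rabs_pos_eq (gauss_prim x + s)) by lra.
    rewrite <- Rabs_mult, <- (Rabs_pos_eq (gauss_aux x)) by lra.
    replace (gauss_aux x) with (- ((gauss_prim x - s) * (gauss_prim x + s))) by nra.
    symmetry; apply Rabs_Ropp. }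
  apply Rmult_lt_reg_r with (gauss_prim x + s); [lra |].
  rewrite Habs; nra.
Qed.

Lemma improper_integral_unique (f : R -> R) (l1 l2 : R) :
  improper_integral f l1 -> improper_integral f l2 -> l1 = l2.
Proof.
  intros [Hint H1] [_ H2]; apply cond_eq; intros eps He.
  destruct (H1 (eps / 2)) as [M1 HM1]; [lra |].
  destruct (H2 (eps / 2)) as [M2 HM2]; [lra |].
  set (M := Rmax (Rabs M1) (Rabs M2)).
  assert (HM1M := Rmax_l (Rabs M1) (Rabs M2)); assert (HM2M := Rmax_r (Rabs M1) (Rabs M2)).
  assert (A1 := Rle_abs M1); assert (A2 := Rle_abs M2).
  assert (B1 := Rle_abs (- M1)); assert (B2 := Rle_abs (- M2)).
  rewrite Rabs_Ropp in B1, B2.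
  destruct (Hint (- M) M) as [pr].
  specialize (HM1 _ _ pr ltac:(unfold M; lra) ltac:(unfold M; lra)).
  specialize (HM2 _ _ pr ltac:(unfold M; lra) ltac:(unfold M; lra)).
  apply Rabs_def2 in HM1; apply Rabs_def2 in HM2; apply Rabs_def1; lra.
Qed.

Lemma Integral_improper (f : R -> R) (l : R) : improper_integral f l -> Integral f = l.
Proof.
  intros H; eapply improper_integral_unique; [| exact H].
  apply (epsilon_spec (inhabits 0) (improper_integral f) (ex_intro _ l H)).
Qed.

Lemma improper_integral_gauss_affine (K c m : R) : 0 < c ->
  improper_integral (fun z => K * gauss ((z - m) / c)) (K * c * sqrt PI).
Proof.
  intros Hc.
  assert (Hex : forall a b, ex_RInt (fun z => gauss ((z - m) / c)) a b).
  { intros; apply (@ex_RInt_continuous R_CompleteNormedModule); intros.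
    apply (@ex_derive_continuous R_AbsRing R_NormedModule).
    unfold gauss; auto_derive; auto. }
  split.
  { intros a b; constructor; apply ex_RInt_Reals_0.
    apply (@ex_RInt_scal R_CompleteNormedModule), Hex. }
  intros eps He.
  set (e := eps / (2 * (Rabs (K * c) + 1))).
  assert (HKc := Rabs_pos (K * c)).
  assert (He' : 0 < e) by (apply Rdiv_lt_0_compat; lra).
  destruct (gauss_prim_cv e He') as [M0 HM0].
  exists (c * Rabs M0 + Rabs m); intros a b pr Ha Hb.
  rewrite <- RInt_Reals, (RInt_ext _ (fun z => scal K (gauss ((z - m) / c)))) by reflexivity.
  rewrite (@RInt_scal R_CompleteNormedModule), RInt_gauss_affine by auto.
  unfold scal; simpl; unfold mult; simpl.
  assert (Tb : Rabs M0 <= (b - m) / c).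
  { apply Rmult_le_reg_l with c; auto.
    replace (c * ((b - m) / c)) with (b - m) by (field; lra).
    assert (T := Rle_abs m); lra. }
  assert (Ta : Rabs M0 <= - ((a - m) / c)).
  { apply Rmult_le_reg_l with c; auto.
    replace (c * - ((a - m) / c)) with (m - a) by (field; lra).
    assert (T := Rle_abs (- m)); rewrite Rabs_Ropp in T; lra. }
  assert (Ub := HM0 _ (Rle_trans _ _ _ (Rle_abs M0) Tb)).
  assert (Ua := HM0 _ (Rle_trans _ _ _ (Rle_abs M0) Ta)).
  rewrite gauss_prim_opp in Ua.
  replace (K * (c * (gauss_prim ((b - m) / c) - gauss_prim ((a - m) / c))) - K * c * sqrt PI)
    with (K * c * ((gauss_prim ((b - m) / c) - sqrt PI / 2)
                   + (- gauss_prim ((a - m) / c) - sqrt PI / 2))) by field.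
  rewrite Rabs_mult.
  apply Rle_lt_trans with (Rabs (K * c) * (2 * e)).
  - apply Rmult_le_compat_l; [lra |].
    eapply Rle_trans; [apply Rabs_triang | lra].
  - unfold e; apply Rmult_lt_reg_r with (Rabs (K * c) + 1); [lra |].
    replace (Rabs (K * c) * (2 * (eps / (2 * (Rabs (K * c) + 1)))) * (Rabs (K * c) + 1))
      with (eps * Rabs (K * c)) by (field; lra).
    nra.
Qed.

(* Completing the square: [a z - z^2 / (2 v) = a^2 v / 2 - (z - a v)^2 / (2 v)]. *)
Lemma improper_integral_exp_normal (k a v : R) : 0 < v ->
  improper_integral (fun z => k * exp (a * z) * normal_density v z) (k * exp (a ^ 2 * v / 2)).
Proof.
  intros Hv.
  set (c := sqrt (2 * v)).
  set (K := k * exp (a ^ 2 * v / 2) / sqrt (2 * PI * v)).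
  assert (Hc : 0 < c) by (apply sqrt_lt_R0; lra).
  assert (Hcc : c * c = 2 * v) by (apply sqrt_sqrt; lra).
  assert (Hpi := PI_RGT_0).
  assert (Hsp : 0 < sqrt PI) by (apply sqrt_lt_R0; lra).
  replace (fun z => k * exp (a * z) * normal_density v z)
    with (fun z => K * gauss ((z - a * v) / c)).
  - replace (k * exp (a ^ 2 * v / 2)) with (K * c * sqrt PI).
    + apply improper_integral_gauss_affine, Hc.
    + unfold K; replace (sqrt (2 * PI * v)) with (c * sqrt PI)
        by (unfold c; rewrite <- sqrt_mult by lra; f_equal; ring).
      field; lra.
  - apply functional_extensionality; intros z.
    unfold K, normal_density, gauss, Rdiv.
    replace ((z - a * v) * / c * ((z - a * v) * / c)) with ((z - a * v) ^ 2 * / (c * c))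
      by (field; lra).
    rewrite Hcc.
    replace (k * exp (a ^ 2 * v * / 2) * / sqrt (2 * PI * v) * exp (- ((z - a * v) ^ 2 * / (2 * v))))
      with (k * / sqrt (2 * PI * v) * (exp (a ^ 2 * v * / 2) * exp (- ((z - a * v) ^ 2 * / (2 * v)))))
      by ring.
    replace (k * exp (a * z) * (exp (- (z * z) * / (2 * v)) * / sqrt (2 * PI * v)))
      with (k * / sqrt (2 * PI * v) * (exp (a * z) * exp (- (z * z) * / (2 * v)))) by ring.
    rewrite <- !exp_plus.
    replace (a ^ 2 * v * / 2 + - ((z - a * v) ^ 2 * / (2 * v)))
      with (a * z + - (z * z) * / (2 * v)) by (field; lra).
    reflexivity.
Qed.

Lemma GE_ext (f g : R -> R) : (forall z, f z = g z) -> GE f = GE g.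
Proof. intros H; f_equal; apply functional_extensionality, H. Qed.

Lemma GEn_ext (m : nat) (F G : (nat -> R) -> R) : (forall w, F w = G w) -> GEn m F = GEn m G.
Proof. intros H; f_equal; apply functional_extensionality, H. Qed.

Lemma GE_exp (k a : R) : GE (fun z => k * exp (a * z)) = k * exp (a ^ 2 / 2).
Proof.
  unfold GE; rewrite (Integral_improper _ _ (improper_integral_exp_normal k a 1 Rlt_0_1)).
  do 3 f_equal; field.
Qed.

Lemma prodR_S (n : nat) (f : nat -> R) : prodR (S n) f = f 1%nat * prodR n (fun t => f (S t)).
Proof.
  induction n as [| n IH]; [simpl; ring |].
  change (prodR (S (S n)) f) with (prodR (S n) f * f (S (S n))).
  rewrite IH; simpl; ring.
Qed.

Lemma prodR_ext (n : nat) (f g : nat -> R) :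
  (forall t, (1 <= t <= n)%nat -> f t = g t) -> prodR n f = prodR n g.
Proof.
  induction n as [| n IH]; intros H; [reflexivity |].
  simpl; rewrite IH by (intros; apply H; lia); rewrite H by lia; reflexivity.
Qed.

Definition scons3 (z0 z1 z2 : R) (w : nat -> R) : nat -> R := scons z0 (scons z1 (scons z2 w)).

Lemma xi_scons3 z0 z1 z2 w t : (1 <= t)%nat -> xi (scons3 z0 z1 z2 w) (S t) = xi w t.
Proof.
  intros H; unfold xi.
  replace (3 * (S t - 1))%nat with (3 + 3 * (t - 1))%nat by lia; reflexivity.
Qed.

Lemma epsi_scons3 z0 z1 z2 w t : (1 <= t)%nat -> epsi (scons3 z0 z1 z2 w) (S t) = epsi w t.
Proof.
  intros H; unfold epsi.
  replace (3 * (S t - 1) + 1)%nat with (3 + (3 * (t - 1) + 1))%nat by lia; reflexivity.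
Qed.

Lemma eta_scons3 z0 z1 z2 w t : (1 <= t)%nat -> eta (scons3 z0 z1 z2 w) (S t) = eta w t.
Proof.
  intros H; unfold eta.
  replace (3 * (S t - 1) + 2)%nat with (3 + (3 * (t - 1) + 2))%nat by lia; reflexivity.
Qed.

Lemma Xpath_scons3 rho sigma x z0 z1 z2 w t :
  Xpath rho sigma x (scons3 z0 z1 z2 w) (S t) = Xpath rho sigma (rho * x + sigma * z2) w t.
Proof.
  induction t as [| t IH]; [reflexivity |].
  change (Xpath rho sigma x (scons3 z0 z1 z2 w) (S (S t))) with
    (rho * Xpath rho sigma x (scons3 z0 z1 z2 w) (S t) + sigma * eta (scons3 z0 z1 z2 w) (S (S t))).
  rewrite IH, eta_scons3 by lia; reflexivity.
Qed.

Section ConditionalExpectation.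

Variables beta gamma mu_c mu_d varphi rho sigma sigma_c sigma_d p : R.
Hypothesis hbeta : 0 < beta.
Hypothesis hrho : -1 < rho < 1.

Local Notation Phi_ := (Phi beta gamma mu_c mu_d varphi rho sigma sigma_c sigma_d).

Lemma Phi_scons3 x z0 z1 z2 w t : (1 <= t)%nat ->
  Phi_ x (scons3 z0 z1 z2 w) (S t) = Phi_ (rho * x + sigma * z2) w t.
Proof.
  intros H; unfold Phi; cbv zeta.
  replace (S t - 1)%nat with (S (t - 1)) by lia.
  rewrite Xpath_scons3, xi_scons3, epsi_scons3 by lia; reflexivity.
Qed.

(* Markov property: integrate out the first period's shocks (xi_1, eps_1, eta_1). *)
Lemma GEn_prodR_Phi_S n x e :
  GEn (3 * S n) (fun w => e * prodR (S n) (Phi_ x w)) =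
  GE (fun z0 => GE (fun z1 => GE (fun z2 =>
    GEn (3 * n) (fun w =>
      e * (beta * exp ((mu_d + varphi * x + sigma_d * z0) - gamma * (mu_c + x + sigma_c * z1)))
      * prodR n (Phi_ (rho * x + sigma * z2) w))))).
Proof.
  replace (3 * S n)%nat with (S (S (S (3 * n)))) by lia.
  apply GE_ext; intros z0; apply GE_ext; intros z1; apply GE_ext; intros z2.
  apply GEn_ext; intros w.
  change (scons z0 (scons z1 (scons z2 w))) with (scons3 z0 z1 z2 w).
  rewrite prodR_S, Rmult_assoc; do 2 f_equal.
  apply prodR_ext; intros t Ht; apply Phi_scons3; lia.
Qed.

Definition loading : R := (varphi - gamma) / (1 - rho).
Definition slope (n : nat) : R := loading * (1 - rho ^ n).
Definition growth_rate : R :=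
  ln beta + mu_d - gamma * mu_c + (sigma_d ^ 2 + (gamma * sigma_c) ^ 2) / 2
  + sigma ^ 2 * loading ^ 2 / 2.
Definition transient (y : R) : R :=
  sigma ^ 2 * loading ^ 2 / 2 * (-2 * (1 - y) / (1 - rho) + (1 - y ^ 2) / (1 - rho ^ 2)).
(* Solves [intercept (S n) = intercept n + growth_rate - sigma^2 loading^2 / 2
   + sigma^2 (slope n)^2 / 2] with [intercept 0 = 0] (two geometric sums). *)
Definition intercept (n : nat) : R := INR n * growth_rate + transient (rho ^ n).

Lemma slope_0 : slope 0 = 0.
Proof. unfold slope; simpl; ring. Qed.

Lemma intercept_0 : intercept 0 = 0.
Proof.
  unfold intercept, transient; simpl.
  assert (1 - rho * (rho * 1) <> 0) by nra.
  field; split; lra.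
Qed.

Lemma slope_S n : slope (S n) = (varphi - gamma) + rho * slope n.
Proof. unfold slope, loading; simpl; field; lra. Qed.

Lemma intercept_S n :
  intercept (S n) = intercept n + growth_rate - sigma ^ 2 * loading ^ 2 / 2
                    + sigma ^ 2 / 2 * slope n ^ 2.
Proof.
  unfold intercept, transient, slope; rewrite S_INR; simpl.
  assert (1 - rho * (rho * 1) <> 0) by nra.
  field; split; lra.
Qed.

Lemma GEn_prodR_Phi n x e :
  GEn (3 * n) (fun w => e * prodR n (Phi_ x w)) = e * exp (intercept n + slope n * x).
Proof.
  revert x e; induction n as [| n IH]; intros x e.
  - rewrite intercept_0, slope_0; simpl; rewrite Rplus_0_l, Rmult_0_l, exp_0; ring.
  - rewrite GEn_prodR_Phi_S.
    set (C := e * exp (ln beta + mu_d + varphi * x - gamma * (mu_c + x)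
                       + intercept n + slope n * rho * x)).
    transitivity (GE (fun z0 => GE (fun z1 => GE (fun z2 =>
      C * exp (sigma_d * z0) * exp (- (gamma * sigma_c) * z1) * exp (slope n * sigma * z2))))).
    { apply GE_ext; intros z0; apply GE_ext; intros z1; apply GE_ext; intros z2.
      rewrite IH; unfold C; rewrite <- (exp_ln beta) at 1 by exact hbeta.
      rewrite !Rmult_assoc, <- !exp_plus; do 2 f_equal; ring. }
    transitivity (GE (fun z0 => GE (fun z1 =>
      C * exp ((slope n * sigma) ^ 2 / 2) * exp (sigma_d * z0) * exp (- (gamma * sigma_c) * z1)))).
    { apply GE_ext; intros z0; apply GE_ext; intros z1; rewrite GE_exp; ring. }
    transitivity (GE (fun z0 =>
      C * exp ((slope n * sigma) ^ 2 / 2) * exp ((- (gamma * sigma_c)) ^ 2 / 2) * exp (sigma_d * z0))).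
    { apply GE_ext; intros z0; rewrite GE_exp; ring. }
    rewrite GE_exp, intercept_S, slope_S; unfold C, growth_rate.
    rewrite !Rmult_assoc, <- !exp_plus; do 2 f_equal; field.
Qed.

Hypothesis hsigma : sigma <> 0.
Hypothesis hp : p <> 0.

Definition stationary_var : R := sigma ^ 2 / (1 - rho ^ 2).
Definition remainder (y : R) : R :=
  transient y + p * (loading * (1 - y)) ^ 2 * stationary_var / 2.

Lemma condExpProdPhi_eq n x :
  condExpProdPhi beta gamma mu_c mu_d varphi rho sigma sigma_c sigma_d n x
  = exp (intercept n + slope n * x).
Proof.
  unfold condExpProdPhi.
  rewrite (GEn_ext _ _ (fun w => 1 * prodR n (Phi_ x w))) by (intros; ring).
  rewrite GEn_prodR_Phi; ring.
Qed.

Lemma LPhi_seq_eq n : (1 <= n)%nat ->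
  LPhi_seq beta gamma mu_c mu_d varphi rho sigma sigma_c sigma_d p n
  = growth_rate + remainder (rho ^ n) / INR n.
Proof.
  intros Hn.
  assert (Hv : 0 < stationary_var).
  { apply Rdiv_lt_0_compat; [apply pow2_gt_0, hsigma | nra]. }
  assert (HnR : 0 < INR n) by (apply lt_0_INR; lia).
  unfold LPhi_seq; fold stationary_var.
  replace (fun x => Rpower (condExpProdPhi beta gamma mu_c mu_d varphi rho sigma sigma_c sigma_d n x) p
                    * normal_density stationary_var x)
    with (fun x => exp (p * intercept n) * exp (p * slope n * x) * normal_density stationary_var x).
  - rewrite (Integral_improper _ _ (improper_integral_exp_normal _ _ _ Hv)).
    rewrite <- exp_plus, ln_exp.
    unfold remainder, intercept, slope; field; split; lra.
  - apply functional_extensionality; intros x.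
    rewrite condExpProdPhi_eq; unfold Rpower; rewrite ln_exp, <- exp_plus.
    do 2 f_equal; ring.
Qed.

Lemma continuity_pt_remainder : continuity_pt remainder 0.
Proof.
  apply continuity_pt_filterlim, (@ex_derive_continuous R_AbsRing R_NormedModule).
  unfold remainder, transient; auto_derive; exact I.
Qed.

End ConditionalExpectation.

Lemma is_lim_seq_plus_geom_div (T r : R) (f : R -> R) :
  Rabs r < 1 -> continuity_pt f 0 -> is_lim_seq (fun n => T + f (r ^ n) / INR n) T.
Proof.
  intros Hr Hf.
  replace (Finite T) with (Rbar_plus T (Rbar_mult (f 0) 0)) by (simpl; f_equal; ring).
  apply is_lim_seq_plus'; [apply is_lim_seq_const |].
  apply is_lim_seq_mult'.
  - apply is_lim_seq_continuous, is_lim_seq_geom; assumption.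
  - replace (Finite 0) with (Rbar_inv p_infty) by reflexivity.
    apply is_lim_seq_inv; [apply is_lim_seq_INR | discriminate].
Qed.

Theorem mainTheorem14
  (beta gamma mu_c mu_d varphi sigma sigma_c sigma_d rho p : R)
  (hbeta : 0 < beta) (hgamma : 0 <= gamma)
  (hsigma : 0 < sigma) (hsigma_c : 0 < sigma_c) (hsigma_d : 0 < sigma_d)
  (hrho : -1 < rho < 1) (hp : 1 <= p) :
  Un_cv (LPhi_seq beta gamma mu_c mu_d varphi rho sigma sigma_c sigma_d p)
    (ln beta + mu_d - gamma * mu_c
     + sigma ^ 2 / 2 * ((varphi - gamma) ^ 2 / (1 - rho) ^ 2)
     + (sigma_d ^ 2 + (gamma * sigma_c) ^ 2) / 2).
Proof.
  apply is_lim_seq_Reals.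
  replace (ln beta + mu_d - gamma * mu_c
           + sigma ^ 2 / 2 * ((varphi - gamma) ^ 2 / (1 - rho) ^ 2)
           + (sigma_d ^ 2 + (gamma * sigma_c) ^ 2) / 2)
    with (growth_rate beta gamma mu_c mu_d varphi rho sigma sigma_c sigma_d)
    by (unfold growth_rate, loading; field; lra).
  eapply is_lim_seq_ext_loc.
  - exists 1%nat; intros n Hn; symmetry; apply LPhi_seq_eq; auto; lra.
  - apply is_lim_seq_plus_geom_div.
    + apply Rabs_def1; lra.
    + apply continuity_pt_remainder.
Qed.
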